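(* Let $\sigma$ be a signature including $\{\triangleright, ;\}$ and let $\mathcal{A}$ be a $\sigma$-algebra that is representable by partial functions and whose atoms are separating. Let $\varphi$ be the first-order sentence asserting: for all $a,b,c$, if $c\ge a;x$ for every atom $x$ with $x\le b$, then $c\ge a;b$. Then composition in $\mathcal{A}$ is completely left-distributive over joins if and only if $\mathcal{A}\models\varphi$.
   Context: Signatures $\sigma$ are sets of operation symbols drawn from: $\triangleright$ (antidomain restriction), $;$ (composition), $\wedge$ (intersection), $\mathrm{upd}$ (update), $\sqcup$ (preferential union), $\mathsf{D}$ (domain), $\mathsf{A}$ (antidomain), interpreted on partial functions as: $f \triangleright g = \{(x,y) \in g : x \notin \mathrm{dom}(f)\}$; $f;g=\{(x,z):\exists y\,((x,y)\in f,(y,z)\in g)\}$; $f\wedge g = f\cap g$; $\mathrm{upd}(f,g)(x)$ is $f(x)$ if $f(x)$ defined and $g(x)$ undefined, $g(x)$ if both defined, undefined otherwise; $(f\sqcup g)(x)$ is $f(x)$ if defined, else $g(x)$; $\mathsf{D}(f)$ = identity on $\mathrm{dom}(f)$; $\mathsf{A}(f)$ = identity on the complement of $\mathrm{dom}(f)$ in the base. $\mathcal{A}$ is representable if isomorphic to a $\sigma$-algebra of partial functions with these operations. Define $0 := a\triangleright a$, $a\lhd b := (a\triangleright b)\triangleright b$, $a \le b :\iff a\lhd b = a$. An atom is a minimal nonzero element (expressible in first-order logic); atoms are separating if whenever $a\not\le b$ there is an atom $c\le a$ with $c\not\le b$. Composition is completely left-distributive over joins if for every $S$ with $\bigvee S$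 existing and every $a$, $\bigvee\{a;s:s\in S\}$ exists and equals $a;\bigvee S$. *)

Inductive sym : Type :=
  | SAntidomRestr  (* antidomain restriction  f |> g *)
  | SComp
  | SInter
  | SUpd
  | SPref
  | SDom
  | SAntidom.

Definition signature := sym -> Prop.

(* An algebra carrying (interpretations of) all seven symbols; for a
   sigma-algebra only the symbols in sigma matter (the others are ignored
   by every notion below except representability, which only constrains
   symbols in sigma). *)
Record salg : Type := SAlg {
  carrier :> Type;
  op_ares : carrier -> carrier -> carrier;
  op_comp : carrier -> carrier -> carrier;
  op_inter : carrier -> carrier -> carrier;
  op_upd : carrier -> carrier -> carrier;
  op_pref : carrier -> carrier -> carrier;
  op_dom : carrier -> carrier;
  op_adom : carrier -> carrier
}.

Definition pfun (X : Type) := X -> option X.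

Definition pf_ares {X} (f g : pfun X) : pfun X :=
  fun x => match f x with Some _ => None | None => g x end.
Definition pf_comp {X} (f g : pfun X) : pfun X :=
  fun x => match f x with Some y => g y | None => None end.
(* intersection specified relationally (avoids decidable equality on X) *)
Definition pf_is_inter {X} (f g k : pfun X) : Prop :=
  forall x y, k x = Some y <-> (f x = Some y /\ g x = Some y).
Definition pf_upd {X} (f g : pfun X) : pfun X :=
  fun x => match f x with
           | None => None
           | Some y => match g x with Some z => Some z | None => Some y end
           end.
Definition pf_pref {X} (f g : pfun X) : pfun X :=
  fun x => match f x with Some y => Some y | None => g x end.
Definition pf_dom {X} (f : pfun X) : pfun X :=
  fun x => match f x with Some _ => Some x | None => None end.
Definition pf_adom {X} (f : pfun X) : pfun X :=
  fun x => match f x with Some _ => None | None => Some x end.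

Definition pf_eq {X} (f g : pfun X) : Prop := forall x, f x = g x.

Definition representable (sg : signature) (A : salg) : Prop :=
  exists (X : Type) (h : A -> pfun X),
    (forall a b, pf_eq (h a) (h b) -> a = b) /\
    (sg SAntidomRestr -> forall a b, pf_eq (h (op_ares A a b)) (pf_ares (h a) (h b))) /\
    (sg SComp -> forall a b, pf_eq (h (op_comp A a b)) (pf_comp (h a) (h b))) /\
    (sg SInter -> forall a b, pf_is_inter (h a) (h b) (h (op_inter A a b))) /\
    (sg SUpd -> forall a b, pf_eq (h (op_upd A a b)) (pf_upd (h a) (h b))) /\
    (sg SPref -> forall a b, pf_eq (h (op_pref A a b)) (pf_pref (h a) (h b))) /\
    (sg SDom -> forall a, pf_eq (h (op_dom A a)) (pf_dom (h a))) /\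
    (sg SAntidom -> forall a, pf_eq (h (op_adom A a)) (pf_adom (h a))).

Section Derived.
Variable A : salg.

Definition zero_of (a : A) : A := op_ares A a a.
Definition nonzero (a : A) : Prop := a <> zero_of a.
Definition lhd (a b : A) : A := op_ares A (op_ares A a b) b.
Definition le (a b : A) : Prop := lhd a b = a.

Definition atom (x : A) : Prop :=
  nonzero x /\ forall y, nonzero y -> le y x -> y = x.

Definition separating_atoms : Prop :=
  forall a b, ~ le a b -> exists c, atom c /\ le c a /\ ~ le c b.

Definition is_join (S : A -> Prop) (j : A) : Prop :=
  (forall s, S s -> le s j) /\
  (forall u, (forall s, S s -> le s u) -> le j u).

Definition comp_completely_left_distributive : Prop :=
  forall (S : A -> Prop) (j : A) (a : A),
    is_join S j ->
    is_join (fun t => exists s, S s /\ t = op_comp A a s) (op_comp A a j).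

Definition phi_holds : Prop :=
  forall a b c : A,
    (forall x, atom x -> le x b -> le (op_comp A a x) c) ->
    le (op_comp A a b) c.

End Derived.

From Stdlib Require Import Classical.

(* Proof strategy.
   (=>) Complete left-distributivity implies phi: by separation of atoms,
   every b is the join of the atoms below it, so a;b is the join of the
   a;x for atoms x <= b and is therefore below every common upper bound c.
   (<=) Fix a representation h of A by partial functions.  Through h,
   a <= b is graph inclusion, 0 is the empty function and a <| b is b
   restricted to the domain of a.  The key fact is that an atom x below a
   join j of S lies below some s in S: otherwise every s in S avoids the
   domain of x (an atom meeting dom s is contained in s), so x |> j would
   be an upper bound of S strictly missing the nonempty part of j above x.
   Given phi, a;(\/S) is then bounded by any upper bound u of {a;s}, since
   each atom x <= \/S lies below some s, whence a;x <= a;s <= u; that a;s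
   <= a;(\/S) is monotonicity of composition. *)

Lemma join_of_atoms_below (A : salg) (b : A) :
  separating_atoms A -> is_join A (fun x => atom A x /\ le A x b) b.
Proof.
  intros Hsep; split.
  - intros s [_ Hs]; exact Hs.
  - intros u Hu. apply NNPP; intro Hnot.
    destruct (Hsep _ _ Hnot) as [c [Hc [Hcb Hcu]]].
    apply Hcu, Hu; auto.
Qed.

(* Left-distributivity over the join of atoms below b is exactly phi. *)
Lemma cld_implies_phi (A : salg) :
  separating_atoms A -> comp_completely_left_distributive A -> phi_holds A.
Proof.
  intros Hsep Hcld a b c Hx.
  destruct (Hcld _ _ a (join_of_atoms_below A b Hsep)) as [_ Hleast].
  apply Hleast. intros t [s [[Hs Hsb] ->]]. apply Hx; assumption.
Qed.

Section Represented.
Variable A : salg.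
Variable X : Type.
Variable h : A -> pfun X.
Hypothesis h_inj : forall a b, pf_eq (h a) (h b) -> a = b.
Hypothesis h_ares : forall a b, pf_eq (h (op_ares A a b)) (pf_ares (h a) (h b)).
Hypothesis h_comp : forall a b, pf_eq (h (op_comp A a b)) (pf_comp (h a) (h b)).

Lemma zero_graph (z : A) (p : X) : h (zero_of A z) p = None.
Proof.
  unfold zero_of. rewrite h_ares. unfold pf_ares.
  destruct (h z p); reflexivity.
Qed.

Lemma lhd_graph (a b : A) (p : X) :
  h (lhd A a b) p = match h a p with Some _ => h b p | None => None end.
Proof.
  unfold lhd. rewrite h_ares. unfold pf_ares. rewrite h_ares. unfold pf_ares.
  destruct (h a p); destruct (h b p); reflexivity.
Qed.

Lemma le_graph (a b : A) :
  le A a b <-> (forall p y, h a p = Some y -> h b p = Some y).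
Proof.
  unfold le; split.
  - intros E p y Hy. rewrite <- E, lhd_graph in Hy.
    destruct (h a p); [exact Hy | discriminate].
  - intros Hincl. apply h_inj; intro p. rewrite lhd_graph.
    destruct (h a p) as [y|] eqn:Hy; [exact (Hincl p y Hy) | reflexivity].
Qed.

Lemma nonzero_graph (z : A) : nonzero A z <-> exists p y, h z p = Some y.
Proof.
  split.
  - intros Hz. apply NNPP; intro Hempty. apply Hz, h_inj; intro p.
    rewrite zero_graph. destruct (h z p) eqn:E; [|reflexivity].
    exfalso; apply Hempty; eauto.
  - intros [p [y Hy]] E. pose proof (zero_graph z p) as H0.
    rewrite <- E in H0. congruence.
Qed.

Lemma le_transitive (a b c : A) : le A a b -> le A b c -> le A a c.
Proof.
  rewrite !le_graph. intros Hab Hbc p y Hy. auto.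
Qed.

Lemma lhd_le (a b : A) : le A (lhd A a b) b.
Proof.
  apply le_graph. intros p y Hy. rewrite lhd_graph in Hy.
  destruct (h a p); [exact Hy | discriminate].
Qed.

Lemma comp_mono_r (a x s : A) :
  le A x s -> le A (op_comp A a x) (op_comp A a s).
Proof.
  rewrite !le_graph. intros Hxs p z Hz.
  rewrite h_comp in Hz |- *. unfold pf_comp in *.
  destruct (h a p); [exact (Hxs _ _ Hz) | discriminate].
Qed.

(* Two elements below a common j agree where both are defined, so an atom
   whose domain meets that of s is entirely below s. *)
Lemma atom_le_of_overlap (x s j : A) (p : X) (y y' : X) :
  atom A x -> le A x j -> le A s j ->
  h x p = Some y -> h s p = Some y' -> le A x s.
Proof.
  intros [_ Hmin] Hxj Hsj Hxp Hsp.
  assert (Hrestr : lhd A s x = x).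
  { apply Hmin; [|apply lhd_le].
    apply nonzero_graph. exists p, y. rewrite lhd_graph, Hsp. exact Hxp. }
  apply le_graph. intros q z Hxq.
  pose proof Hxq as Hxq'. rewrite <- Hrestr, lhd_graph in Hxq'.
  destruct (h s q) as [c|] eqn:Hsq; [|discriminate].
  pose proof (proj1 (le_graph _ _) Hxj q z Hxq) as Hjz.
  pose proof (proj1 (le_graph _ _) Hsj q c Hsq) as Hjc.
  congruence.
Qed.

Lemma le_ares_of_not_le (x s j : A) :
  atom A x -> le A x j -> le A s j -> ~ le A x s -> le A s (op_ares A x j).
Proof.
  intros Hx Hxj Hsj Hnot. apply le_graph. intros p y Hsp.
  rewrite h_ares. unfold pf_ares.
  destruct (h x p) as [y'|] eqn:Hxp.
  - exfalso. exact (Hnot (atom_le_of_overlap x s j p y' y Hx Hxj Hsj Hxp Hsp)).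
  - exact (proj1 (le_graph _ _) Hsj p y Hsp).
Qed.

(* An atom below the join of S is below some member of S: otherwise x |> j
   would be an upper bound of S, hence above j, yet undefined on dom x. *)
Lemma atom_below_join (S : A -> Prop) (j x : A) :
  is_join A S j -> atom A x -> le A x j -> exists s, S s /\ le A x s.
Proof.
  intros [Hupper Hleast] Hx Hxj. apply NNPP; intro Hnone.
  assert (Hub : forall s, S s -> le A s (op_ares A x j)).
  { intros s Hs. apply le_ares_of_not_le; auto.
    intro Hxs. apply Hnone; eauto. }
  destruct (proj1 (nonzero_graph x) (proj1 Hx)) as [p [y Hxp]].
  pose proof (proj1 (le_graph _ _) (le_transitive _ _ _ Hxj (Hleast _ Hub)) p y Hxp)
    as Hxjp.
  rewrite h_ares in Hxjp. unfold pf_ares in Hxjp. rewrite Hxp in Hxjp.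
  discriminate.
Qed.

Lemma phi_implies_cld : phi_holds A -> comp_completely_left_distributive A.
Proof.
  intros Hphi S j a HJ. split.
  - intros t [s [Hs ->]]. apply comp_mono_r, (proj1 HJ _ Hs).
  - intros u Hu. apply Hphi. intros x Hx Hxj.
    destruct (atom_below_join S j x HJ Hx Hxj) as [s [Hs Hxs]].
    apply le_transitive with (op_comp A a s); [apply comp_mono_r, Hxs|].
    apply Hu. exists s; auto.
Qed.

End Represented.

Theorem lemma7p3 (sg : signature) (A : salg) :
  sg SAntidomRestr -> sg SComp ->
  representable sg A ->
  separating_atoms A ->
  (comp_completely_left_distributive A <-> phi_holds A).
Proof.
  intros Hares Hcomp [X [h [Hinj [Hh_ares [Hh_comp _]]]]] Hsep. split.
  - apply cld_implies_phi, Hsep.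
  - apply (phi_implies_cld A X h Hinj (Hh_ares Hares) (Hh_comp Hcomp)).
Qed.
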